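(* The subalgebra of $U^+$ generated by $e_2,w,e_3$ and the subalgebra of $U^+$ generated by $e_1,\overline{e_3},\overline w$ are not isomorphic as $\Bbbk$-algebras.
   Context: $\Bbbk$ is an algebraically closed field of characteristic zero and $q\in\Bbbk^\times$ is not a root of unity. $U^+$ is the $\Bbbk$-algebra generated by $e_1,e_2$ with relations (S1) $e_1^2e_2-(q^2+q^{-2})e_1e_2e_1+e_2e_1^2=0$ and (S2) $e_2^3e_1-(q^2+1+q^{-2})e_2^2e_1e_2+(q^2+1+q^{-2})e_2e_1e_2^2-e_1e_2^3=0$. Set $e_3=e_1e_2-q^2e_2e_1$, $w=e_2e_3-e_3e_2$, $\overline{e_3}=e_1e_2-q^{-2}e_2e_1$, $\overline w=e_2\overline{e_3}-\overline{e_3}e_2$. *)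

From HB Require Import structures.
From mathcomp Require Import all_boot all_order all_algebra.
Set Implicit Arguments. Unset Strict Implicit. Unset Printing Implicit Defensive.
Import GRing.Theory.
Local Open Scope ring_scope.

Section Defs.
Variable k : fieldType.

Definition serre_rel (q : k) (B : algType k) (x y : B) : Prop :=
  x * x * y - (q ^+ 2 + q ^- 2) *: (x * y * x) + y * x * x = 0 /\
  y * y * y * x - (q ^+ 2 + 1 + q ^- 2) *: (y * y * x * y)
    + (q ^+ 2 + 1 + q ^- 2) *: (y * x * y * y) - x * y * y * y = 0.

(* (A, e1, e2) is the k-algebra presented by generators e1, e2 and
   relations (S1), (S2): universal property of the presentation. *)
Definition is_Uplus (q : k) (A : algType k) (e1 e2 : A) : Prop :=
  serre_rel q e1 e2 /\
  forall (B : algType k) (b1 b2 : B), serre_rel q b1 b2 ->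
    (exists f : {lrmorphism A -> B}, f e1 = b1 /\ f e2 = b2) /\
    (forall f g : {lrmorphism A -> B}, f e1 = g e1 -> f e2 = g e2 -> f =1 g).

Definition e3 (q : k) (A : algType k) (e1 e2 : A) : A := e1 * e2 - q ^+ 2 *: (e2 * e1).
Definition wq (q : k) (A : algType k) (e1 e2 : A) : A :=
  e2 * e3 q e1 e2 - e3 q e1 e2 * e2.
Definition e3bar (q : k) (A : algType k) (e1 e2 : A) : A := e1 * e2 - q ^- 2 *: (e2 * e1).
Definition wbar (q : k) (A : algType k) (e1 e2 : A) : A :=
  e2 * e3bar q e1 e2 - e3bar q e1 e2 * e2.

Definition in_gen_subalg (A : algType k) (gens : seq A) (x : A) : Prop :=
  forall P : {pred A}, subalg_closed P -> {subset gens <= P} -> x \in P.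

Definition subalg_iso (A : algType k) (S T : A -> Prop) : Prop :=
  exists f : A -> A,
    (forall x, S x -> T (f x)) /\
    (forall x y, S x -> S y -> f x = f y -> x = y) /\
    (forall y, T y -> exists2 x, S x & f x = y) /\
    f 1 = 1 /\
    (forall a x y, S x -> S y -> f (a *: x + y) = a *: f x + f y) /\
    (forall x y, S x -> S y -> f (x * y) = f x * f y).
End Defs.

From HB Require Import structures.
From mathcomp Require Import all_boot all_order all_algebra.
From mathcomp Require Import boolp.
Set Implicit Arguments.
Unset Strict Implicit.
Unset Printing Implicit Defensive.

Import GRing.Theory.
Local Open Scope ring_scope.

(* The assignment e1 |-> E01, e2 |-> E12 - E23 on 4x4 matrices satisfies the
   Serre relations (the images x, y have x^2 = yx = y^3 = 0), hence defines a
   representation rho of U^+. It sends e1, e3bar, wbar to E01, E02, E03, so rho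
   maps the second subalgebra T into the commutative algebra of matrices
   a + v0 E01 + v1 E02 + v2 E03, where the "tangent part" v obeys the Leibniz
   rule v(xy) = a(x) v(y) + a(y) v(x), and rho(T) has three independent tangent
   vectors. If f were an isomorphism from the first subalgebra S onto T, then
   rho o f would kill the commutator w = [e2, e3], so the tangent parts of
   rho(f(S)) = rho(T) would lie in the span of those of rho(f e2) and
   rho(f e3), of dimension at most 2. No hypothesis on k or q is needed. *)

Section GenSubalg.
Variables (k : fieldType) (A : algType k) (gens : seq A).
Let S := in_gen_subalg gens.

Lemma in_gen_subalg_mem x : x \in gens -> S x.
Proof. by move=> gx P _ /(_ x gx). Qed.

Lemma in_gen_subalg1 : S 1.
Proof. by move=> P [P1 _ _]. Qed.

Lemma in_gen_subalg_lin a x y : S x -> S y -> S (a *: x + y).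
Proof. by move=> Sx Sy P PS sP; case: (PS) => _ Plin _; apply: Plin; [apply: Sx | apply: Sy]. Qed.

Lemma in_gen_subalgM x y : S x -> S y -> S (x * y).
Proof. by move=> Sx Sy P PS sP; case: (PS) => _ _ PM; apply: PM; [apply: Sx | apply: Sy]. Qed.

Lemma in_gen_subalg_ind (P : A -> Prop) :
  P 1 ->
  (forall a x y, S x -> S y -> P x -> P y -> P (a *: x + y)) ->
  (forall x y, S x -> S y -> P x -> P y -> P (x * y)) ->
  (forall x, x \in gens -> P x) ->
  forall x, S x -> P x.
Proof.
move=> P1 Plin PM Pgens x Sx.
suff /asboolP[] : x \in [pred z | `[< S z /\ P z >]] by [].
apply: Sx; last by move=> g gg; apply/asboolP; split; [apply: in_gen_subalg_mem | apply: Pgens].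
split; first by apply/asboolP; split; [apply: in_gen_subalg1 | apply: P1].
  move=> a y z /asboolP[Sy Py] /asboolP[Sz Pz]; apply/asboolP.
  by split; [apply: in_gen_subalg_lin | apply: Plin].
move=> y z /asboolP[Sy Py] /asboolP[Sz Pz]; apply/asboolP.
by split; [apply: in_gen_subalgM | apply: PM].
Qed.
End GenSubalg.

Lemma serre_rel_nil (k : fieldType) (q : k) (B : algType k) (x y : B) :
  x * x = 0 -> y * x = 0 -> y * y * y = 0 -> serre_rel q x y.
Proof.
move=> xx yx yyy.
have xyx : x * y * x = 0 by rewrite -mulrA yx mulr0.
have yyx : y * y * x = 0 by rewrite -mulrA yx mulr0.
have xyyy : x * y * y * y = 0 by rewrite -!mulrA [y * (y * y)]mulrA yyy mulr0.
split; first by rewrite xx yx xyx !mul0r scaler0 subrr addr0.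
by rewrite yyy yyx yx xyyy !mul0r !scaler0 subrr add0r subrr.
Qed.

Lemma lrmorph_e3bar (k : fieldType) (q : k) (A B : algType k)
    (f : {lrmorphism A -> B}) (x y : A) :
  f (e3bar q x y) = e3bar q (f x) (f y).
Proof. by rewrite /e3bar raddfB /= rmorphM; congr (_ - _); rewrite linearZ /= rmorphM. Qed.

Lemma lrmorph_wbar (k : fieldType) (q : k) (A B : algType k)
    (f : {lrmorphism A -> B}) (x y : A) :
  f (wbar q x y) = wbar q (f x) (f y).
Proof. by rewrite /wbar -lrmorph_e3bar -!rmorphM -raddfB. Qed.

Lemma unit_rows_not_sub (F : fieldType) m n (W : 'M[F]_(m, n)) :
  (m < n)%N -> ~ (forall i, (delta_mx 0 i : 'rV_n) <= W)%MS.
Proof.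
move=> ltmn unitW; have /mxrankS : (1%:M <= W)%MS by apply/row_subP => i; rewrite row1.
by rewrite mxrank1 => /leq_trans/(_ (rank_leq_row W)); rewrite leqNgt ltmn.
Qed.

Lemma ord3P (i : 'I_3) : [\/ i = 0, i = 1 | i = 2].
Proof.
by case: i => -[|[|[|//]]] lt_i; [constructor 1 | constructor 2 | constructor 3]; apply: val_inj.
Qed.

Section Dual.
Variable k : fieldType.

Definition dualmx (a : k) (v : 'rV[k]_3) : 'M[k]_(1 + 3) := block_mx a%:M v 0 a%:M.

Lemma dualmx_mul a v b w : dualmx a v * dualmx b w = dualmx (a * b) (a *: w + b *: v).
Proof.
rewrite -mulmxE mulmx_block !mulmx0 !mul0mx !addr0 !add0r -!scalar_mxM.
by rewrite mul_scalar_mx mul_mx_scalar.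
Qed.

Lemma dualmx_mulC a v b w : dualmx a v * dualmx b w = dualmx b w * dualmx a v.
Proof. by rewrite !dualmx_mul mulrC addrC. Qed.

Lemma dualmx_lin a b v c w : a *: dualmx b v + dualmx c w = dualmx (a * b + c) (a *: v + w).
Proof. by rewrite scale_block_mx add_block_mx !scale_scalar_mx scaler0 addr0 -!raddfD. Qed.

Lemma dualmxN a v : - dualmx a v = dualmx (- a) (- v).
Proof. by rewrite opp_block_mx oppr0 -!raddfN. Qed.

Lemma dualmx1 : dualmx 1 0 = 1.
Proof. by rewrite -idmxE [RHS]scalar_mx_block. Qed.

Lemma dualmx0 : dualmx 0 0 = 0.
Proof. by rewrite /dualmx !raddf0 block_mx0. Qed.

Lemma dualmx_inj a v b w : dualmx a v = dualmx b w -> v = w.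
Proof. by move/(congr1 ursubmx); rewrite !block_mxKur. Qed.

Lemma gen_subalg_dualmx (A : algType k) (rho : {lrmorphism A -> 'M[k]_(1 + 3)})
    (gens : seq A) :
  (forall g, g \in gens -> exists a v, rho g = dualmx a v) ->
  forall z, in_gen_subalg gens z -> exists a v, rho z = dualmx a v.
Proof.
move=> rho_gens; apply: in_gen_subalg_ind => //.
- by exists 1, 0; rewrite rmorph1 dualmx1.
- move=> c x y _ _ [a [v rho_x]] [b [w rho_y]].
  by exists (c * a + b), (c *: v + w); rewrite raddfD /= linearZ /= rho_x rho_y dualmx_lin.
- move=> x y _ _ [a [v rho_x]] [b [w rho_y]].
  by exists (a * b), (a *: w + b *: v); rewrite rmorphM /= rho_x rho_y dualmx_mul.
Qed.

Section DualSpan.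
Variables (A : algType k) (x z : A) (psi : A -> 'M[k]_(1 + 3)).
Let S := in_gen_subalg [:: x; x * z - z * x; z].
Hypotheses (psi1 : psi 1 = 1)
  (psi_lin : forall a u v, S u -> S v -> psi (a *: u + v) = a *: psi u + psi v)
  (psiM : forall u v, S u -> S v -> psi (u * v) = psi u * psi v).
Variables (ax az : k) (vx vz : 'rV[k]_3).
Hypotheses (psi_x : psi x = dualmx ax vx) (psi_z : psi z = dualmx az vz).

Lemma gen_subalg_dualmx_span u :
  S u -> exists a v, psi u = dualmx a v /\ (v <= col_mx vx vz)%MS.
Proof.
have Sx : S x by apply: in_gen_subalg_mem; rewrite inE eqxx.
have Sz : S z by apply: in_gen_subalg_mem; rewrite !inE eqxx !orbT.
have /andP[vx_sub vz_sub] : (vx <= col_mx vx vz)%MS && (vz <= col_mx vx vz)%MS.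
  by rewrite -col_mx_sub submx_refl.
move: u; apply: in_gen_subalg_ind => [|||g].
- by exists 1, 0; rewrite psi1 dualmx1 sub0mx.
- move=> c u1 u2 Su1 Su2 [a [v [psi_u1 sv]]] [b [w [psi_u2 sw]]].
  exists (c * a + b), (c *: v + w); rewrite psi_lin // psi_u1 psi_u2 dualmx_lin.
  by rewrite addmx_sub ?scalemx_sub.
- move=> u1 u2 Su1 Su2 [a [v [psi_u1 sv]]] [b [w [psi_u2 sw]]].
  exists (a * b), (a *: w + b *: v); rewrite psiM // psi_u1 psi_u2 dualmx_mul.
  by rewrite addmx_sub ?scalemx_sub.
rewrite !inE => /or3P[] /eqP->.
- by exists ax, vx.
- exists 0, 0; split; last exact: sub0mx.
  have -> : x * z - z * x = (-1) *: (z * x) + x * z by rewrite scaleN1r addrC.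
  have Szx : S (z * x) by apply: in_gen_subalgM.
  have Sxz : S (x * z) by apply: in_gen_subalgM.
  rewrite psi_lin // !psiM // psi_x psi_z dualmx_mulC.
  by rewrite scaleN1r addNr dualmx0.
- by exists az, vz.
Qed.
End DualSpan.

Definition shift3 : 'M[k]_3 := delta_mx 0 1 - delta_mx 1 2.
Definition rep1 : 'M[k]_(1 + 3) := dualmx 0 'e_0.
Definition rep2 : 'M[k]_(1 + 3) := block_mx 0 0 0 shift3.

Lemma dualmx0_mul_rep2 v : dualmx 0 v * rep2 = dualmx 0 (v *m shift3).
Proof. by rewrite /dualmx !raddf0 -mulmxE mulmx_block !(mulmx0, mul0mx, addr0, add0r). Qed.

Lemma rep2_mul_dualmx0 v : rep2 * dualmx 0 v = 0.
Proof. by rewrite /dualmx !raddf0 -mulmxE mulmx_block !(mulmx0, mul0mx, addr0) block_mx0. Qed.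

Lemma shift3_sqr : shift3 *m shift3 = - delta_mx 0 2.
Proof. by rewrite /shift3 mulmxBl !mulmxBr !mul_delta_mx_cond /= !(subr0, sub0r). Qed.

Lemma shift3_cube : shift3 *m shift3 *m shift3 = 0.
Proof. by rewrite shift3_sqr mulNmx mulmxBr !mul_delta_mx_cond /= subrr oppr0. Qed.

Lemma rep2_cube : rep2 * rep2 * rep2 = 0.
Proof.
rewrite -!mulmxE !mulmx_block !(mulmx0, mul0mx, addr0, add0r).
by rewrite shift3_cube block_mx0.
Qed.

Lemma serre_rel_rep q : serre_rel q rep1 rep2.
Proof.
apply: serre_rel_nil; last exact: rep2_cube.
  by rewrite /rep1 dualmx_mul !scale0r addr0 mulr0 dualmx0.
exact: rep2_mul_dualmx0.
Qed.

Lemma e3bar_rep q : e3bar q rep1 rep2 = dualmx 0 'e_1.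
Proof.
rewrite /e3bar /rep1 dualmx0_mul_rep2 rep2_mul_dualmx0 scaler0 subr0.
by rewrite mulmxBr !mul_delta_mx_cond /= subr0.
Qed.

Lemma wbar_rep q : wbar q rep1 rep2 = dualmx 0 'e_2.
Proof.
rewrite /wbar e3bar_rep rep2_mul_dualmx0 dualmx0_mul_rep2 sub0r.
by rewrite mulmxBr !mul_delta_mx_cond /= mulr0n mulr1n sub0r dualmxN oppr0 opprK.
Qed.

Lemma rep_gens q (A : algType k) (e1 e2 : A) (rho : {lrmorphism A -> 'M[k]_(1 + 3)}) :
  rho e1 = rep1 -> rho e2 = rep2 ->
  [/\ rho e1 = dualmx 0 'e_0, rho (e3bar q e1 e2) = dualmx 0 'e_1
     & rho (wbar q e1 e2) = dualmx 0 'e_2].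
Proof.
move=> rho_e1 rho_e2.
by rewrite lrmorph_e3bar lrmorph_wbar rho_e1 rho_e2 e3bar_rep wbar_rep.
Qed.
End Dual.

Theorem mainTheorem18 (k : closedFieldType) (q : k)
  (char0 : [pchar k] =i pred0)
  (q_nz : q != 0)
  (q_not_root : forall n : nat, (0 < n)%N -> q ^+ n != 1)
  (A : algType k) (e1 e2 : A) (HU : is_Uplus q e1 e2) :
  ~ subalg_iso
      (in_gen_subalg [:: e2; wq q e1 e2; e3 q e1 e2])
      (in_gen_subalg [:: e1; e3bar q e1 e2; wbar q e1 e2]).
Proof.
move=> [f [fST [_ [fsurj [f1 [f_lin fM]]]]]].
have [[rho [rho_e1 rho_e2]] _] := HU.2 _ _ _ (serre_rel_rep q).
have [rho1 rho2 rho3] := rep_gens q rho_e1 rho_e2.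
set S := in_gen_subalg [:: e2; wq q e1 e2; e3 q e1 e2].
set T := in_gen_subalg [:: e1; e3bar q e1 e2; wbar q e1 e2].
have rhoT : forall z, T z -> exists a v, rho z = dualmx a v.
  by apply: gen_subalg_dualmx => g; rewrite !inE => /or3P[] /eqP->; do 2!eexists; eassumption.
have S_e2 : S e2 by apply: in_gen_subalg_mem; rewrite inE eqxx.
have S_e3 : S (e3 q e1 e2) by apply: in_gen_subalg_mem; rewrite !inE eqxx !orbT.
have [a2 [v2 rho_fe2]] := rhoT _ (fST _ S_e2).
have [a3 [v3 rho_fe3]] := rhoT _ (fST _ S_e3).
have span : forall u, S u -> exists a v, rho (f u) = dualmx a v /\ (v <= col_mx v2 v3)%MS.
  apply: (gen_subalg_dualmx_span (psi := rho \o f) _ _ _ rho_fe2 rho_fe3) => /=.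
  - by rewrite f1 rmorph1.
  - by move=> a u v Su Sv; rewrite f_lin // raddfD /= linearZ.
  - by move=> u v Su Sv; rewrite fM // rmorphM.
apply: (@unit_rows_not_sub _ _ _ (col_mx v2 v3)) => // i.
suff [z Tz rho_z] : exists2 z, T z & rho z = dualmx 0 'e_i.
  have [u Su fu] := fsurj z Tz; have [a [v [rho_fu sv]]] := span u Su.
  by rewrite fu rho_z in rho_fu; rewrite (dualmx_inj rho_fu).
have T_gen z : z \in [:: e1; e3bar q e1 e2; wbar q e1 e2] -> T z by apply: in_gen_subalg_mem.
have [-> | -> | ->] := ord3P i.
- by exists e1 => //; apply: T_gen; rewrite inE eqxx.
- by exists (e3bar q e1 e2) => //; apply: T_gen; rewrite !inE eqxx orbT.
- by exists (wbar q e1 e2) => //; apply: T_gen; rewrite !inE eqxx !orbT.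
Qed.
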